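(* Let $S$ be a pair of pants with boundary components $A_1,A_2,A_3$, let $\pi$ be a convex projective structure on $S$ with monodromy $\rho_\pi\colon \pi_1(S)\to\mathrm{SL}_3(\mathbb{R})$, and let $\lambda_i,\tau_i$ ($i=1,2,3$) be its Goldman boundary parameters and $\tau_{111}(T_\pm)$, $\sigma_1(B_j)$, $\sigma_2(B_j)$ its Fock–Goncharov coordinates (as defined in the context). Then, for $i=1,2,3$ (indices modulo 3), $$\lambda_i=\exp\Big(\tfrac13\sigma_1(B_{i+1})+\tfrac23\sigma_2(B_{i+1})+\tfrac23\sigma_1(B_{i-1})+\tfrac13\sigma_2(B_{i-1})+\tfrac23\tau_{111}(T_+)+\tfrac23\tau_{111}(T_-)\Big)$$ and $$\tau_i=\big(e^{-\sigma_1(B_{i+1})-\sigma_2(B_{i-1})}+1\big)\exp\Big(\tfrac13\sigma_1(B_{i+1})-\tfrac13\sigma_2(B_{i+1})-\tfrac13\sigma_1(B_{i-1})+\tfrac13\sigma_2(B_{i-1})-\tfrac13\tau_{111}(T_+)-\tfrac13\tau_{111}(T_-)\Big).$$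
   Context: $S$ is a compact oriented pair of pants with boundary components $A_1,A_2,A_3$, each oriented opposite to the boundary orientation induced by $S$ (and also regarded as conjugacy classes in $\pi_1(S)$). A convex projective structure $\pi$ on $S$ has a developing map $\widetilde S\to\mathbb{RP}^2$ (a homeomorphism onto a convex domain) equivariant under a monodromy $\rho_\pi\colon\pi_1(S)\to\mathrm{SL}_3(\mathbb{R})$, well defined up to conjugation. For such $\pi$, $\rho_\pi(A_i)$ has distinct positive real eigenvalues $0<\lambda_i<\mu_i<\nu_i$; Goldman's boundary parameters are $\lambda_i$ and $\tau_i=\mu_i+\nu_i$. The unstable flag of $\rho_\pi(A_i)$ is the flag $F^{(1)}\subset F^{(2)}$ where $F^{(1)}$ is the $\lambda_i$-eigenline and $F^{(2)}$ is spanned by the $\lambda_i$- and $\mu_i$-eigenlines. Identify the interior of $S$ with $S^2-\{p_1,p_2,p_3\}$, $p_i$ corresponding to $A_i$, and decompose it into two ideal triangles $T_+,T_-$ glued along three disjoint lines $B_1,B_2,B_3$, where $B_i$ goes (and is oriented) from $p_{i-1}$ to $p_{i+1}$ (indices mod 3), and $p_1,p_2,p_3$ occur in this order clockwise around $T_+$ (counterclockwise around $T_-$). Each vertex of a lift of $T_\pm$ to $\widetilde S$ is fixed by a conjugate $g A_j g^{-1}$ of some $A_j$; assign to it the unstable flag of $\rho_\pi(gA_jg^{-1})$ (equivariantly). For a flag $F$, $f^{(a)}$ denotes any nonzero element of $\Lambda^a F^{(a)}$, and wedges of total degree 3 are identified with real numbers via a fixed volume form. Triangle invariants: if a lift $\widetilde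 T_+$ has vertices with flags $F_1,F_2,F_3$ (vertices fixed by conjugates of $A_1,A_2,A_3$, occurring clockwise in this order), then $\tau_{111}(T_+)=\log\Big(\frac{f_1^{(2)}\wedge f_2^{(1)}}{f_2^{(1)}\wedge f_3^{(2)}}\frac{f_1^{(1)}\wedge f_3^{(2)}}{f_1^{(1)}\wedge f_2^{(2)}}\frac{f_2^{(2)}\wedge f_3^{(1)}}{f_1^{(2)}\wedge f_3^{(1)}}\Big)$; if a lift $\widetilde T_-$ has vertex flags $F'_1,F'_2,F'_3$ (counterclockwise in this order), then $\tau_{111}(T_-)=\log\Big(\frac{f_1'^{(2)}\wedge f_3'^{(1)}}{f_2'^{(2)}\wedge f_3'^{(1)}}\frac{f_1'^{(1)}\wedge f_2'^{(2)}}{f_1'^{(1)}\wedge f_3'^{(2)}}\frac{f_2'^{(1)}\wedge f_3'^{(2)}}{f_1'^{(2)}\wedge f_2'^{(1)}}\Big)$. Shear invariants: lift $B_i$ to $\widetilde B_i$ with adjacent lifts $\widetilde T_+,\widetilde T_-$; let $F_{i+1},F_{i-1}$ be the flags at the positive and negative endpoints of $\widetilde B_i$, $F_i$ the flag at the third vertex of $\widetilde T_+$, and $F_i'$ the flag at the third vertex of $\widetilde T_-$. Then $\sigma_1(B_i)=\log\Big(-\frac{f_{i+1}^{(1)}\wedge f_{i-1}^{(1)}\wedge f_i^{(1)}}{f_{i+1}^{(1)}\wedge f_{i-1}^{(1)}\wedge f_i'^{(1)}}\frac{f_{i-1}^{(2)}\wedge f_i'^{(1)}}{f_{i-1}^{(2)}\wedge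 f_i^{(1)}}\Big)$ and $\sigma_2(B_i)=\log\Big(-\frac{f_{i+1}^{(1)}\wedge f_{i-1}^{(1)}\wedge f_i'^{(1)}}{f_{i+1}^{(1)}\wedge f_{i-1}^{(1)}\wedge f_i^{(1)}}\frac{f_{i+1}^{(2)}\wedge f_i^{(1)}}{f_{i+1}^{(2)}\wedge f_i'^{(1)}}\Big)$. (All quantities inside the logarithms are positive.) *)

From HB Require Import structures.
From mathcomp Require Import all_boot all_order all_algebra.
From mathcomp Require Import all_classical all_reals all_analysis.
Set Implicit Arguments. Unset Strict Implicit. Unset Printing Implicit Defensive.
Import Order.TTheory GRing.Theory Num.Theory.
Local Open Scope ring_scope.

Section Defs.
Variable R : realType.

Definition cols3 (u v w : 'cV[R]_3) : 'M[R]_3 :=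
  \matrix_(i < 3, j < 3)
    (if (j : nat) == 0%N then u i 0 else if (j : nat) == 1%N then v i 0 else w i 0).

(* u /\ v /\ w identified with a real number via the standard volume form. *)
Definition wedge3 (u v w : 'cV[R]_3) : R := \det (cols3 u v w).

Definition eigvec (M : 'M[R]_3) (l : R) (v : 'cV[R]_3) : Prop :=
  v != 0 /\ M *m v = l *: v.

(* A (complete) flag F^(1) < F^(2) is encoded by a pair (a, b) with
   F^(1) = span a and F^(2) = span (a, b); then f^(1) = a and f^(2) = a /\ b. *)
Definition flag := ('cV[R]_3 * 'cV[R]_3)%type.

Definition flag_act (M : 'M[R]_3) (F : flag) : flag := (M *m F.1, M *m F.2).

Definition w12 (F G : flag) : R := wedge3 F.1 G.1 G.2.
Definition w21 (F G : flag) : R := wedge3 F.1 F.2 G.1.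
Definition w111 (F G H : flag) : R := wedge3 F.1 G.1 H.1.

Definition tplus_arg (F1 F2 F3 : flag) : R :=
  (w21 F1 F2 / w12 F2 F3) * (w12 F1 F3 / w12 F1 F2) * (w21 F2 F3 / w21 F1 F3).
Definition tminus_arg (F1 F2 F3 : flag) : R :=
  (w21 F1 F3 / w21 F2 F3) * (w12 F1 F2 / w12 F1 F3) * (w12 F2 F3 / w21 F1 F2).
(* Fp = flag at positive endpoint, Fm = at negative endpoint,
   F = third vertex of T_+ lift, F' = third vertex of T_- lift *)
Definition sigma1_arg (Fp Fm F F' : flag) : R :=
  - (w111 Fp Fm F / w111 Fp Fm F') * (w21 Fm F' / w21 Fm F).
Definition sigma2_arg (Fp Fm F F' : flag) : R :=
  - (w111 Fp Fm F' / w111 Fp Fm F) * (w21 Fp F / w21 Fp F').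

Definition tplus F1 F2 F3 : R := ln (tplus_arg F1 F2 F3).
Definition tminus F1 F2 F3 : R := ln (tminus_arg F1 F2 F3).
Definition sigma1 Fp Fm F F' : R := ln (sigma1_arg Fp Fm F F').
Definition sigma2 Fp Fm F F' : R := ln (sigma2_arg Fp Fm F F').

End Defs.

(* cyclic successor / predecessor on the index set {0,1,2} ~ {A_1,A_2,A_3} *)
Definition nxt (i : 'I_3) : 'I_3 := ordS i.
Definition prv (i : 'I_3) : 'I_3 := ord_pred i.

From mathcomp Require Import all_boot all_order all_algebra.
From mathcomp Require Import all_classical all_reals all_analysis.
From mathcomp Require Import ring lra.
Import Order.TTheory GRing.Theory Num.Theory.
Local Open Scope ring_scope.
Set Implicit Arguments. Unset Strict Implicit.

(* Every wedge occurring in the coordinates can be moved by a monodromy matrix of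
   determinant 1 (using rho_2 rho_1 rho_0 = 1 to invert a product of two of them)
   until its vectors are eigenvectors, which only multiplies it by eigenvalues.
   This gives exp (tau_111(T_+) + tau_111(T_-)) = 1 / (mu_1 mu_2 mu_3), and
   expresses the shears of B_j through eigenvalues and one unknown per edge, the
   triple ratio t_j = - (f_(j+1) /\ f_(j-1) /\ f'_j) / (f_(j+1) /\ f_(j-1) /\ f_j);
   moreover t_(i-1) / t_(i+1) = lambda_(i+1) / lambda_i.  In the stated
   combinations of logarithms the t_j cancel, and nu_i = 1 / (lambda_i mu_i). *)

Lemma ord3_cases (i : 'I_3) : [\/ i = 0, i = 1 | i = 2].
Proof.
case: i => [[|[|[|//]]] ?]; [apply: Or31 | apply: Or32 | apply: Or33]; exact: val_inj.
Qed.

Lemma nxt_values : [/\ nxt 0 = 1, nxt 1 = 2 & nxt 2 = 0].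
Proof. by split; apply: val_inj. Qed.

Lemma prv_values : [/\ prv 0 = 2, prv 1 = 0 & prv 2 = 1].
Proof. by split; apply: val_inj. Qed.

Lemma prv_nxt (i : 'I_3) : prv (nxt i) = i.
Proof. exact: ordSK. Qed.

Lemma nxt_prv (i : 'I_3) : nxt (prv i) = i.
Proof. exact: ord_predK. Qed.

Lemma nxt_nxt (i : 'I_3) : nxt (nxt i) = prv i.
Proof.
have [n0 n1 n2] := nxt_values; have [p0 p1 p2] := prv_values.
by case: (ord3_cases i) => ->; rewrite ?(n0, n1, n2, p0, p1, p2).
Qed.

Lemma prv_prv (i : 'I_3) : prv (prv i) = nxt i.
Proof. by rewrite -[in RHS](nxt_prv i) nxt_nxt. Qed.

Lemma sum_ord3_rot (V : zmodType) (f : 'I_3 -> V) (i : 'I_3) :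
  f 0 + f 1 + f 2 = f i + f (nxt i) + f (prv i).
Proof.
have [n0 n1 n2] := nxt_values; have [p0 p1 p2] := prv_values.
case: (ord3_cases i) => ->; rewrite ?(n0, n1, n2, p0, p1, p2) //.
- by rewrite [RHS]addrC addrA.
- by rewrite addrC addrA.
Qed.

Lemma char_poly_distinct_eigenvalues (F : fieldType) n (A : 'M[F]_n) (rs : seq F) :
  size rs = n -> uniq rs -> all (eigenvalue A) rs ->
  char_poly A = \prod_(r <- rs) ('X - r%:P).
Proof.
move=> size_rs uniq_rs eig_rs.
have roots_rs : all (root (char_poly A)) rs.
  by apply/allP => r /(allP eig_rs); rewrite eigenvalue_root_char.
have [|q charE] := uniq_roots_prod_XsubC roots_rs; first by rewrite uniq_rootsE.
have monic_prod := monic_prod_XsubC rs predT (fun r => r).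
have q_neq0 : q != 0.
  apply: contraTneq (char_poly_monic A) => q0.
  by rewrite charE q0 mul0r monicE lead_coef0 eq_sym oner_eq0.
have size_q : size q = 1%N.
  move: (size_char_poly A); rewrite charE size_Mmonic // size_prod_XsubC size_rs.
  by rewrite addnS /= -[X in _ = X]add1n => /addIn.
have lead_q : lead_coef q = 1.
  by rewrite -(lead_coef_Mmonic q monic_prod) -charE; apply/monicP/char_poly_monic.
have q1 : q = 1 by rewrite [q]size1_polyC ?size_q // -polyC1 -lead_q /lead_coef size_q.
by rewrite charE q1 mul1r.
Qed.

Lemma det_distinct_eigenvalues (F : fieldType) n (A : 'M[F]_n) (rs : seq F) :
  size rs = n -> uniq rs -> all (eigenvalue A) rs -> \det A = \prod_(r <- rs) r.
Proof.
move=> size_rs uniq_rs eig_rs.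
have := char_poly_det A.
rewrite (char_poly_distinct_eigenvalues size_rs uniq_rs eig_rs) coef0_prod_XsubC size_rs.
have sign_neq0 : (-1) ^+ n != 0 :> F by rewrite signr_eq0.
by move=> /(mulfI sign_neq0).
Qed.

Lemma det_mx33 (R : comNzRingType) (A : 'M[R]_3) :
  \det A = A 0 0 * (A 1 1 * A 2 2 - A 1 2 * A 2 1)
         - A 0 1 * (A 1 0 * A 2 2 - A 1 2 * A 2 0)
         + A 0 2 * (A 1 0 * A 2 1 - A 1 1 * A 2 0).
Proof.
rewrite (expand_det_row _ 0) !big_ord_recl big_ord0 /cofactor.
rewrite !(expand_det_row _ 0) !big_ord_recl !big_ord0 /cofactor.
rewrite !det_mx11 /= !mxE /=.
pose a (x y : nat) := A (inord x) (inord y).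
have aE (x y : 'I_3) : A x y = a x y by rewrite /a !inord_val.
rewrite !aE; clearbody a => /=.
rewrite /bump /=.
ring.
Qed.

Section Wedge.
Variable R : realType.
Implicit Types (u v w : 'cV[R]_3) (k : R).

Lemma wedge3E u v w : wedge3 u v w =
  u 0 0 * (v 1 0 * w 2 0 - w 1 0 * v 2 0) - v 0 0 * (u 1 0 * w 2 0 - w 1 0 * u 2 0)
  + w 0 0 * (u 1 0 * v 2 0 - v 1 0 * u 2 0).
Proof. by rewrite /wedge3 det_mx33 /cols3 !mxE. Qed.

Lemma wedge3Zl k u v w : wedge3 (k *: u) v w = k * wedge3 u v w.
Proof. rewrite !wedge3E !mxE; ring. Qed.

Lemma wedge3Zm k u v w : wedge3 u (k *: v) w = k * wedge3 u v w.
Proof. rewrite !wedge3E !mxE; ring. Qed.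

Lemma wedge3Zr k u v w : wedge3 u v (k *: w) = k * wedge3 u v w.
Proof. rewrite !wedge3E !mxE; ring. Qed.

Lemma wedge3_rot u v w : wedge3 u v w = wedge3 v w u.
Proof. rewrite !wedge3E; ring. Qed.

Lemma wedge3_mulmx (M : 'M[R]_3) u v w :
  wedge3 (M *m u) (M *m v) (M *m w) = \det M * wedge3 u v w.
Proof.
rewrite /wedge3 -det_mulmx; congr (\det _); apply/matrixP => i j; rewrite !mxE.
by case: j => -[|[|[|//]]] ? /=; apply: eq_bigr => k _; rewrite !mxE.
Qed.

Lemma eigvec_eigenvalue_tr (M : 'M[R]_3) l v : eigvec M l v -> eigenvalue M^T l.
Proof.
case=> v_neq0 Mv; apply/eigenvalueP; exists v^T; last by rewrite trmx_eq0.
by rewrite -trmx_mul Mv linearZ.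
Qed.

End Wedge.

Lemma mulmx_eigen_inv (F : fieldType) n (A B C : 'M[F]_n) (l : F) (v : 'cV[F]_n) :
  A *m B *m C = 1%:M -> C *m v = l *: v -> l != 0 -> A *m (B *m v) = l^-1 *: v.
Proof.
move=> ABC1 Cv l_neq0.
by rewrite -[in RHS](mul1mx v) -ABC1 -!mulmxA Cv !scalemxAr scalerA mulVf ?scale1r.
Qed.

Lemma det_eigvec3 (R : realType) (M : 'M[R]_3) l m n u v w :
  eigvec M l u -> eigvec M m v -> eigvec M n w -> uniq [:: l; m; n] -> \det M = l * m * n.
Proof.
move=> eig_u eig_v eig_w lmn_uniq.
rewrite -det_tr (det_distinct_eigenvalues _ lmn_uniq) //.
  by rewrite !big_cons big_nil mulr1 mulrA.
by rewrite /= (eigvec_eigenvalue_tr eig_u) (eigvec_eigenvalue_tr eig_v) (eigvec_eigenvalue_tr eig_w).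
Qed.

Lemma det1_third_eigenvalue (R : realType) (M : 'M[R]_3) l m n u v w :
  \det M = 1 -> eigvec M l u -> eigvec M m v -> eigvec M n w ->
  0 < l -> l < m -> m < n -> n = (l * m)^-1.
Proof.
move=> detM1 eig_u eig_v eig_w l_gt0 lm mn.
have lmn_uniq : uniq [:: l; m; n] by rewrite /= !inE !negb_or !lt_eqF ?(lt_trans lm mn).
have lm_neq0 : l * m != 0 by rewrite mulf_neq0 ?lt0r_neq0 ?(lt_trans l_gt0 lm).
by rewrite -[n](mulKf lm_neq0) -(det_eigvec3 eig_u eig_v eig_w lmn_uniq) detM1 mulr1.
Qed.

Lemma mulmx3_rot (R : comNzRingType) n (A B C : 'M[R]_n) :
  A *m B *m C = 1%:M -> B *m C *m A = 1%:M.
Proof. by rewrite -mulmxA => /mulmx1C. Qed.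

Lemma rho_cycle_of_prod (R : comNzRingType) n (rho : 'I_3 -> 'M[R]_n) :
  rho 2 *m rho 1 *m rho 0 = 1%:M -> forall i, rho (nxt i) *m rho i *m rho (prv i) = 1%:M.
Proof.
move=> prod1 i; have [n0 n1 n2] := nxt_values; have [p0 p1 p2] := prv_values.
case: (ord3_cases i) => ->; rewrite ?(n0, n1, n2, p0, p1, p2) //.
- exact: mulmx3_rot.
- exact/mulmx3_rot/mulmx3_rot.
Qed.

Section PantsFlags.
Variables (R : realType) (rho : 'I_3 -> 'M[R]_3) (lam mu : 'I_3 -> R).
Variables (e1 e2 : 'I_3 -> 'cV[R]_3).
Hypothesis det_rho : forall i, \det (rho i) = 1.
Hypothesis rho_cycle : forall i, rho (nxt i) *m rho i *m rho (prv i) = 1%:M.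
Hypothesis rho_e1 : forall i, rho i *m e1 i = lam i *: e1 i.
Hypothesis rho_e2 : forall i, rho i *m e2 i = mu i *: e2 i.
Hypothesis lam_gt0 : forall i, 0 < lam i.
Hypothesis mu_gt0 : forall i, 0 < mu i.

Local Notation F i := ((e1 i, e2 i) : flag R).
Local Notation F' i := (flag_act (rho (nxt i)) (F i)).

Let lam_neq0 i : lam i != 0 := lt0r_neq0 (lam_gt0 i).
Let mu_neq0 i : mu i != 0 := lt0r_neq0 (mu_gt0 i).

Lemma wedge3_rho i u v w : wedge3 (rho i *m u) (rho i *m v) (rho i *m w) = wedge3 u v w.
Proof. by rewrite wedge3_mulmx det_rho mul1r. Qed.

Lemma rho_prv_nxt_e1 j : rho (prv j) *m (rho (nxt j) *m e1 j) = (lam j)^-1 *: e1 j.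
Proof.
apply: mulmx_eigen_inv (rho_e1 j) (lam_neq0 j).
by have := rho_cycle (nxt j); rewrite nxt_nxt prv_nxt.
Qed.

Lemma rho_prv_nxt_e2 j : rho (prv j) *m (rho (nxt j) *m e2 j) = (mu j)^-1 *: e2 j.
Proof.
apply: mulmx_eigen_inv (rho_e2 j) (mu_neq0 j).
by have := rho_cycle (nxt j); rewrite nxt_nxt prv_nxt.
Qed.

Lemma w21_prv_shift j :
  w21 (F (prv j)) (F' j) * lam j = lam (prv j) * mu (prv j) * w21 (F (prv j)) (F j).
Proof.
rewrite /w21 /= -(wedge3_rho (prv j)) rho_e1 rho_e2 rho_prv_nxt_e1.
by rewrite wedge3Zl wedge3Zm wedge3Zr; field.
Qed.

Lemma w21_nxt_shift j :
  w21 (F (nxt j)) (F' j) * (lam (nxt j) * mu (nxt j)) = w21 (F (nxt j)) (F j).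
Proof.
rewrite /w21 /= -[RHS](wedge3_rho (nxt j)) rho_e1 rho_e2.
by rewrite wedge3Zl wedge3Zm; ring.
Qed.

Lemma w21_shift_nxt j : w21 (F' j) (F (nxt j)) * lam (nxt j) = w21 (F j) (F (nxt j)).
Proof. by rewrite /w21 /= -[RHS](wedge3_rho (nxt j)) rho_e1 wedge3Zr mulrC. Qed.

Lemma w12_shift_nxt j :
  w12 (F' j) (F (nxt j)) * (lam (nxt j) * mu (nxt j)) = w12 (F j) (F (nxt j)).
Proof.
rewrite /w12 /= -[RHS](wedge3_rho (nxt j)) rho_e1 rho_e2.
by rewrite wedge3Zm wedge3Zr; ring.
Qed.

Lemma w21_shift_prv j :
  w21 (F' j) (F (prv j)) * (lam j * mu j) = lam (prv j) * w21 (F j) (F (prv j)).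
Proof.
rewrite /w21 /= -(wedge3_rho (prv j)) rho_e1 rho_prv_nxt_e1 rho_prv_nxt_e2.
by rewrite wedge3Zl wedge3Zm wedge3Zr; field; rewrite mu_neq0 lam_neq0.
Qed.

Lemma w12_shift_prv j :
  w12 (F' j) (F (prv j)) * lam j = lam (prv j) * mu (prv j) * w12 (F j) (F (prv j)).
Proof.
rewrite /w12 /= -(wedge3_rho (prv j)) rho_e1 rho_e2 rho_prv_nxt_e1.
by rewrite wedge3Zl wedge3Zm wedge3Zr; field.
Qed.

Definition vertex_triple j := w111 (F (nxt j)) (F (prv j)) (F j).
Definition shifted_triple j := w111 (F (nxt j)) (F (prv j)) (F' j).
Definition edge_ratio j := - shifted_triple j / vertex_triple j.

Lemma vertex_triple_nxt j : vertex_triple (nxt j) = vertex_triple j.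
Proof. by rewrite /vertex_triple /w111 /= nxt_nxt prv_nxt [RHS]wedge3_rot. Qed.

Lemma vertex_triple_prv j : vertex_triple (prv j) = vertex_triple j.
Proof. by rewrite -[in RHS](nxt_prv j) vertex_triple_nxt. Qed.

Lemma shifted_triple_nxt j :
  lam (nxt j) * shifted_triple (nxt j) = lam j * shifted_triple (prv j).
Proof.
rewrite /shifted_triple /w111 /= nxt_nxt prv_nxt nxt_prv prv_prv.
have := rho_prv_nxt_e1 (nxt j); rewrite prv_nxt nxt_nxt => back_e1.
rewrite -(wedge3_rho j) rho_e1 back_e1.
by rewrite wedge3Zm wedge3Zr [in RHS]wedge3_rot [in RHS]wedge3_rot; field.
Qed.

Lemma edge_ratio_prv j : edge_ratio (prv j) = lam (nxt j) / lam j * edge_ratio (nxt j).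
Proof.
rewrite /edge_ratio vertex_triple_prv -(vertex_triple_nxt j).
rewrite -[shifted_triple (prv j)](mulKf (lam_neq0 j)) -shifted_triple_nxt.
by ring.
Qed.

Hypothesis sigma1_arg_gt0 : forall j, 0 < sigma1_arg (F (nxt j)) (F (prv j)) (F j) (F' j).
Hypothesis sigma2_arg_gt0 : forall j, 0 < sigma2_arg (F (nxt j)) (F (prv j)) (F j) (F' j).

Lemma sigma1_argE j : sigma1_arg (F (nxt j)) (F (prv j)) (F j) (F' j) =
  (edge_ratio j)^-1 * (lam (prv j) * mu (prv j) / lam j).
Proof.
have w21_neq0 : w21 (F (prv j)) (F j) != 0.
  by apply: contraTneq (sigma1_arg_gt0 j) => w0; rewrite /sigma1_arg w0 invr0 !mulr0 ltxx.
rewrite /sigma1_arg /edge_ratio invf_div invrN mulrN; congr (_ * _).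
by apply/eqP; rewrite eqr_div // w21_prv_shift.
Qed.

Lemma sigma2_argE j : sigma2_arg (F (nxt j)) (F (prv j)) (F j) (F' j) =
  edge_ratio j * (lam (nxt j) * mu (nxt j)).
Proof.
have w21_neq0 : w21 (F (nxt j)) (F' j) != 0.
  by apply: contraTneq (sigma2_arg_gt0 j) => w0; rewrite /sigma2_arg w0 invr0 !mulr0 ltxx.
by rewrite /sigma2_arg /edge_ratio -w21_nxt_shift [_ * _ / _]mulrAC divff // mul1r !mulNr.
Qed.

Lemma edge_ratio_gt0 j : 0 < edge_ratio j.
Proof.
have c_gt0 : 0 < lam (nxt j) * mu (nxt j) by apply: mulr_gt0.
by rewrite -(pmulr_lgt0 _ c_gt0) -sigma2_argE.
Qed.

Lemma ln_edge_ratio_prv j : ln (edge_ratio (prv j)) =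
  ln (lam (nxt j)) - ln (lam j) + ln (edge_ratio (nxt j)).
Proof.
have t_gt0 := edge_ratio_gt0 (nxt j).
by rewrite edge_ratio_prv lnM ?posrE // ?divr_gt0 // [ln (_ / lam _)]ln_div ?posrE.
Qed.

Lemma sigma1_ln j : sigma1 (F (nxt j)) (F (prv j)) (F j) (F' j) =
  - ln (edge_ratio j) + ln (lam (prv j)) + ln (mu (prv j)) - ln (lam j).
Proof.
have t_gt0 := edge_ratio_gt0 j.
have c_gt0 : 0 < lam (prv j) * mu (prv j) / lam j by rewrite divr_gt0 ?mulr_gt0.
rewrite /sigma1 sigma1_argE lnM ?posrE ?invr_gt0 // lnV ?posrE //.
by rewrite ln_div ?posrE ?mulr_gt0 // lnM ?posrE // !addrA.
Qed.

Lemma sigma2_ln j : sigma2 (F (nxt j)) (F (prv j)) (F j) (F' j) =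
  ln (edge_ratio j) + ln (lam (nxt j)) + ln (mu (nxt j)).
Proof.
have t_gt0 := edge_ratio_gt0 j.
have c_gt0 : 0 < lam (nxt j) * mu (nxt j) by rewrite mulr_gt0.
by rewrite /sigma2 sigma2_argE lnM ?posrE // [ln (lam _ * _)]lnM ?posrE // addrA.
Qed.

Hypothesis tplus_arg_gt0 : 0 < tplus_arg (F 0) (F 1) (F 2).
Hypothesis tminus_arg_gt0 : 0 < tminus_arg (F' 0) (F 1) (F 2).

Lemma tplus_tminus_argM :
  tplus_arg (F 0) (F 1) (F 2) * tminus_arg (F' 0) (F 1) (F 2) = (mu 0 * mu 1 * mu 2)^-1.
Proof.
have := lt0r_neq0 tplus_arg_gt0; rewrite /tplus_arg !mulf_eq0 !invr_eq0 !negb_or.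
move=> /andP[/andP[/andP[w21_01 w12_12] /andP[w12_02 w12_01]] /andP[w21_12 w21_02]].
have [n0 _ _] := nxt_values; have [p0 _ _] := prv_values.
have := w21_shift_nxt 0; have := w12_shift_nxt 0; have := w21_shift_prv 0; have := w12_shift_prv 0.
rewrite /tminus_arg n0 p0.
move=> /(canRL (mulfK (lam_neq0 0))) -> /(canRL (mulfK (mulf_neq0 (lam_neq0 0) (mu_neq0 0)))) ->.
move=> /(canRL (mulfK (mulf_neq0 (lam_neq0 1) (mu_neq0 1)))) -> /(canRL (mulfK (lam_neq0 1))) ->.
by field; rewrite ?lam_neq0 ?mu_neq0 ?w21_01 ?w12_12 ?w12_02 ?w12_01 ?w21_12 ?w21_02.
Qed.

Lemma tplus_tminus :
  tplus (F 0) (F 1) (F 2) + tminus (F' 0) (F 1) (F 2) = - (ln (mu 0) + ln (mu 1) + ln (mu 2)).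
Proof.
have mu012_gt0 : 0 < mu 0 * mu 1 * mu 2 by rewrite !mulr_gt0.
rewrite /tplus /tminus -lnM ?posrE // tplus_tminus_argM lnV ?posrE //.
by rewrite !lnM ?posrE ?mulr_gt0.
Qed.

End PantsFlags.

Theorem proposition1 (R : realType) (rho : 'I_3 -> 'M[R]_3)
    (lam mu nu : 'I_3 -> R) (e1 e2 e3 : 'I_3 -> 'cV[R]_3) :
  (forall i, \det (rho i) = 1) ->
  rho 2%R *m rho 1%R *m rho 0%R = 1%:M ->
  (forall i, 0 < lam i /\ lam i < mu i /\ mu i < nu i) ->
  (forall i, eigvec (rho i) (lam i) (e1 i) /\ eigvec (rho i) (mu i) (e2 i)
             /\ eigvec (rho i) (nu i) (e3 i)) ->
  let F := fun i : 'I_3 => ((e1 i, e2 i) : flag R) in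
  let F' := fun i : 'I_3 => flag_act (rho (nxt i)) (F i) in
  0 < tplus_arg (F 0%R) (F 1%R) (F 2%R) ->
  0 < tminus_arg (F' 0%R) (F 1%R) (F 2%R) ->
  (forall j, 0 < sigma1_arg (F (nxt j)) (F (prv j)) (F j) (F' j)) ->
  (forall j, 0 < sigma2_arg (F (nxt j)) (F (prv j)) (F j) (F' j)) ->
  let tP := tplus (F 0%R) (F 1%R) (F 2%R) in
  let tM := tminus (F' 0%R) (F 1%R) (F 2%R) in
  let s1 := fun j => sigma1 (F (nxt j)) (F (prv j)) (F j) (F' j) in
  let s2 := fun j => sigma2 (F (nxt j)) (F (prv j)) (F j) (F' j) in
  forall i : 'I_3,
    lam i = expR (3^-1 * s1 (nxt i) + 2 / 3 * s2 (nxt i)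
                  + 2 / 3 * s1 (prv i) + 3^-1 * s2 (prv i)
                  + 2 / 3 * tP + 2 / 3 * tM)
    /\ mu i + nu i =
       (expR (- s1 (nxt i) - s2 (prv i)) + 1)
       * expR (3^-1 * s1 (nxt i) - 3^-1 * s2 (nxt i)
               - 3^-1 * s1 (prv i) + 3^-1 * s2 (prv i)
               - 3^-1 * tP - 3^-1 * tM).
Proof.
move=> det_rho prod1 ordered eig F F' tplus_gt0 tminus_gt0 s1_gt0 s2_gt0 tP tM s1 s2 i.
have rho_cycle := rho_cycle_of_prod prod1.
have rho_e1 j : rho j *m e1 j = lam j *: e1 j by case: (eig j) => -[].
have rho_e2 j : rho j *m e2 j = mu j *: e2 j by case: (eig j) => _ [[]].
have lam_gt0 j : 0 < lam j by case: (ordered j).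
have mu_gt0 j : 0 < mu j by case: (ordered j) => l_gt0 [/(lt_trans l_gt0)].
pose T j := ln (edge_ratio rho e1 e2 j).
have s1E j : s1 j = - T j + ln (lam (prv j)) + ln (mu (prv j)) - ln (lam j).
  exact: sigma1_ln.
have s2E j : s2 j = T j + ln (lam (nxt j)) + ln (mu (nxt j)).
  exact: sigma2_ln.
have T_prv : T (prv i) = ln (lam (nxt i)) - ln (lam i) + T (nxt i).
  exact: ln_edge_ratio_prv.
have tPM : tP + tM = - (ln (mu i) + ln (mu (nxt i)) + ln (mu (prv i))).
  rewrite -(sum_ord3_rot (fun j => ln (mu j))).
  exact: tplus_tminus.
have nuE : nu i = (lam i * mu i)^-1.
  have [l_gt0 [lm mn]] := ordered i; have [eig1 [eig2 eig3]] := eig i.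
  exact: det1_third_eigenvalue (det_rho i) eig1 eig2 eig3 l_gt0 lm mn.
move: (s1E (nxt i)) (s2E (nxt i)) (s1E (prv i)) (s2E (prv i)).
rewrite prv_nxt nxt_nxt prv_prv nxt_prv T_prv => s1n s2n s1p s2p.
split.
- by rewrite -[lam i]lnK ?posrE //; congr expR; lra.
- set E := (X in _ * expR X).
  have -> : E = ln (mu i) by rewrite /E; lra.
  have -> : - s1 (nxt i) - s2 (prv i) = - (ln (lam i) + ln (mu i) + ln (mu i)) by lra.
  rewrite expRN !expRD !lnK ?posrE // nuE.
  by field; rewrite ?lt0r_neq0.
Qed.
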